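(* For $\lambda>0$ and $c>0$, let $V\sim\mathrm{Exp}(\lambda)$ and define the creator's expected profit $$P(p_0,r)=\mathbb{E}\big[(p_0+rV)\,\mathbb{1}_{\{(1-r)V\ge p_0\}}\big]+p_0\,\Pr\big[(1-r)V<p_0\le V\big]-c,\qquad p_0\ge 0,\ r\in[0,1].$$ Let $u_c^*=\sup_{p_0\ge 0,r\in[0,1]}P(p_0,r)$ and $u_{c,r=0}^*=\sup_{p_0\ge0}P(p_0,0)$. Then the set $\mathbb{T}=\{(\lambda,c):\ u_c^*\ge 0,\ u_{c,r=0}^*<0,\ \lambda>0,\ c>0\}$ is non-empty.
   Context: Interpretation: information-asymmetry model in which a speculator observes the realized end-buyer valuation $v$, buys at price $p_0$ iff $(1-r)v\ge p_0$ and resells at $v$ paying royalty $rv$ to the creator; otherwise the creator sells directly to the end-buyer at $p_0$ iff $v\ge p_0$. $c$ is the creator's cost. Trade occurs iff the optimal profit is nonnegative. *)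

From HB Require Import structures.
From mathcomp Require Import all_boot all_order all_algebra.
From mathcomp Require Import all_classical all_reals all_analysis.
Set Implicit Arguments. Unset Strict Implicit. Unset Printing Implicit Defensive.
Import Order.TTheory GRing.Theory Num.Theory.
Local Open Scope classical_set_scope.
Local Open Scope ring_scope.

Definition creator_profit {R : realType} (lam c p0 r : R) : \bar R :=
  ((\int[lebesgue_measure]_(v in [set v : R | (p0 <= (1 - r) * v)%R])
      ((p0 + r * v) * exponential_pdf lam v)%:E)
   + p0%:E * exponential_prob lam [set v : R | ((1 - r) * v < p0 <= v)%R]
   - c%:E)%E.

Definition u_star {R : realType} (lam c : R) : \bar R :=
  ereal_sup [set u : \bar R | exists p0 r : R,
     [/\ (0 <= p0)%R, (0 <= r <= 1)%R & u = creator_profit lam c p0 r]].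

Definition u_star_r0 {R : realType} (lam c : R) : \bar R :=
  ereal_sup [set u : \bar R | exists p0 : R,
     (0 <= p0)%R /\ u = creator_profit lam c p0 0].

From HB Require Import structures.
From mathcomp Require Import all_boot all_order all_algebra.
From mathcomp Require Import all_classical all_reals all_analysis.
From mathcomp Require Import measurable_realfun ring lra.
Import Order.TTheory GRing.Theory Num.Theory.
Import numFieldTopology.Exports.
Local Open Scope classical_set_scope.
Local Open Scope ring_scope.

(* With p0 = 0 and r = 1 the creator takes the whole resale value as royalty,
   so u_c^* >= E[V] - c >= 1/(2 lam) - c (this crude bound on E[V] suffices).
   With r = 0 the profit is p0 e^{-lam p0} - c <= 1/(e lam) - c.  Since
   1/e < 1/2, any c in ]1/(e lam), 1/(2 lam)] works, e.g. lam = 1, c = 1/2. *)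

Section scaled_exponential_pdf.
Context {R : realType}.

Lemma measurable_scaled_exponential_pdf (k r : R) :
  measurable_fun setT (EFin \o (fun v => k * exponential_pdf r v)).
Proof.
by apply/measurable_EFinP; apply: measurable_funM => //; exact: measurable_exponential_pdf.
Qed.

Lemma integral_scaled_exponential_pdf (k r : R) : 0 <= k -> 0 < r ->
  (\int[lebesgue_measure]_v (k * exponential_pdf r v)%:E = k%:E)%E.
Proof.
move=> k_ge0 r_gt0; under eq_integral do rewrite EFinM.
rewrite ge0_integralZl_EFin ?integral_exponential_pdf ?mule1 //.
- by move=> v _; rewrite lee_fin exponential_pdf_ge0 // ltW.
- by apply/measurable_EFinP; exact: measurable_exponential_pdf.
Qed.

End scaled_exponential_pdf.

Section exponential_moments.
Context {R : realType}.
Variable lam : R.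
Hypothesis lam_gt0 : 0 < lam.
Notation mu := (@lebesgue_measure R).

Lemma exponential_tail (a : R) : 0 <= a ->
  (\int[mu]_(v in `[a, +oo[) (exponential_pdf lam v)%:E
   = (expR (- lam * a))%:E)%E.
Proof.
move=> a_ge0.
have cexpNM : continuous (fun z : R^o => expR (- lam * z)).
  move=> z; apply: continuous_comp; last exact: continuous_expR.
  by apply: continuousM => //; apply: (@continuousN _ R^o); exact: cst_continuous.
rewrite (@ge0_continuous_FTC2y _ _ (fun v => - expR (- lam * v)) a 0).
- by rewrite EFinN sub0e oppeK.
- by move=> v _; exact: exponential_pdf_ge0 (ltW lam_gt0) v.
- apply: (@continuous_subspaceW R^o _ _ [set` `[0, +oo[%R]).
    by move=> v /=; rewrite !in_itv /= !andbT; exact: le_trans.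
  exact: within_continuous_exponential_pdf.
- rewrite -oppr0; apply: cvgN.
  rewrite (_ : (fun v => expR (- lam * v)) =
               (fun z => expR (- z)) \o (fun z => lam * z)); last first.
    by apply: eq_fun => v; rewrite mulNr.
  apply: (@cvg_comp _ _ _ _ _ _ (pinfty_nbhs R)); last exact: cvgr_expR.
  exact: gt0_cvgMry.
- by move=> z _; exact: ex_derive.
- by apply: cvgN; apply/cvg_at_right_filter; exact: cexpNM.
- move=> z; rewrite in_itv /= andbT => az.
  by apply: derive1_exponential_pdf; rewrite in_itv /= andbT; exact: le_lt_trans az.
Qed.

(* Pointwise this is [1 <= lam v + e^{-lam v}] multiplied by [e^{-lam v}]. *)
Lemma exponential_pdf_le_scaled (v : R) :
  lam^-1 * exponential_pdf lam v
  <= v * exponential_pdf lam v + (2 * lam)^-1 * exponential_pdf (2 * lam) v.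
Proof.
have [v_lt0|v_ge0] := ltP v 0.
  by rewrite !lt0_exponential_pdf // !mulr0 addr0.
have lam2_neq0 : 2 * lam != 0 by rewrite mulf_neq0 ?gt_eqF.
rewrite !exponential_pdfE // mulKf ?gt_eqF // mulKf //.
have -> : expR (- (2 * lam) * v) = expR (- lam * v) * expR (- lam * v).
  by rewrite -expRD; congr expR; ring.
have := expR_ge1Dx (- lam * v); have := expR_gt0 (- lam * v).
move: (expR _) => y y_gt0 y_ge; nra.
Qed.

Lemma exponential_mean_ge :
  (((2 * lam)^-1)%:E <= \int[mu]_v (v * exponential_pdf lam v)%:E)%E.
Proof.
have lam2_gt0 : 0 < 2 * lam by rewrite mulr_gt0.
have vpdf_ge0 v : 0 <= v * exponential_pdf lam v.
  have [v_lt0|v_ge0] := ltP v 0; last by rewrite mulr_ge0 // exponential_pdf_ge0 // ltW.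
  by rewrite lt0_exponential_pdf // mulr0.
have pdf2_ge0 v : 0 <= (2 * lam)^-1 * exponential_pdf (2 * lam) v.
  by rewrite mulr_ge0 ?invr_ge0 ?exponential_pdf_ge0 // ltW.
have : (\int[mu]_v (lam^-1 * exponential_pdf lam v)%:E
        <= \int[mu]_v (v * exponential_pdf lam v
                       + (2 * lam)^-1 * exponential_pdf (2 * lam) v)%:E)%E.
  apply: ge0_le_integral => //.
  - by move=> v _; rewrite lee_fin mulr_ge0 ?invr_ge0 ?exponential_pdf_ge0 ?(ltW lam_gt0).
  - exact: measurable_scaled_exponential_pdf.
  - apply: measurableT_comp => //; apply: measurable_funD => //;
      by apply: measurable_funM => //; exact: measurable_exponential_pdf.
  - by move=> v _; rewrite lee_fin exponential_pdf_le_scaled.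
under [X in (_ <= X)%E]eq_integral do rewrite EFinD.
rewrite ge0_integralD //; last 4 first.
- by move=> v _; rewrite lee_fin.
- apply: measurableT_comp => //; apply: measurable_funM => //.
  exact: measurable_exponential_pdf.
- by move=> v _; rewrite lee_fin.
- exact: measurable_scaled_exponential_pdf.
rewrite !integral_scaled_exponential_pdf ?invr_ge0 ?(ltW lam_gt0) ?(ltW lam2_gt0) //.
rewrite -leeBlDr // -EFinB.
by have -> : lam^-1 - (2 * lam)^-1 = (2 * lam)^-1 by field; rewrite gt_eqF.
Qed.

End exponential_moments.

Lemma mulr_expRN_le {R : realType} (x : R) : x * expR (- x) <= expR (-1).
Proof.
have x_le : x <= expR (x - 1) by have := expR_ge1Dx (x - 1); rewrite addrC subrK.
have -> : expR (-1) = expR (x - 1) * expR (- x) by rewrite -expRD; congr expR; ring.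
by rewrite ler_pM2r ?expR_gt0.
Qed.

Lemma expRN1_lt_half {R : realType} : expR (-1) < 2^-1 :> R.
Proof.
rewrite expRN ltf_pV2 ?posrE ?expR_gt0 //.
by have := expR_gt1Dx (oner_neq0 R).
Qed.

Section creator_profit.
Context {R : realType}.
Variables lam c : R.
Hypothesis lam_gt0 : 0 < lam.

Lemma creator_profit_full_royalty :
  creator_profit lam c 0 1
  = (\int[lebesgue_measure]_v (v * exponential_pdf lam v)%:E - c%:E)%E.
Proof.
rewrite /creator_profit mul0e adde0.
rewrite (_ : [set v : R | 0 <= (1 - 1) * v] = setT); last first.
  by apply/seteqP; split => v //= _; rewrite subrr mul0r.
by under eq_integral do rewrite add0r mul1r.
Qed.

Lemma creator_profit_no_royalty (p0 : R) : 0 <= p0 ->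
  creator_profit lam c p0 0 = (p0 * expR (- lam * p0) - c)%:E.
Proof.
move=> p0_ge0; rewrite /creator_profit.
rewrite (_ : [set v : R | p0 <= (1 - 0) * v] = `[p0, +oo[%classic); last first.
  by apply/seteqP; split => v /=; rewrite in_itv /= andbT subr0 mul1r.
rewrite (_ : [set v : R | (1 - 0) * v < p0 <= v] = set0); last first.
  apply/seteqP; split => v //=; rewrite subr0 mul1r => /andP[lt_vp0 le_p0v].
  by move: (lt_le_trans lt_vp0 le_p0v); rewrite ltxx.
rewrite /exponential_prob integral_set0 mule0 adde0.
under eq_integral do rewrite mul0r addr0 EFinM.
rewrite ge0_integralZl_EFin //; last 2 first.
- by move=> v _; rewrite lee_fin exponential_pdf_ge0 // ltW.
- apply/measurable_funTS/measurable_EFinP; exact: measurable_exponential_pdf.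
by rewrite exponential_tail // -EFinM -EFinB.
Qed.

Lemma u_star_ge : (((2 * lam)^-1 - c)%:E <= u_star lam c)%E.
Proof.
apply: le_trans (ereal_sup_ubound _); last first.
  by exists 0, 1; split => //; rewrite ler01 lexx.
by rewrite creator_profit_full_royalty EFinB leeB // exponential_mean_ge.
Qed.

Lemma u_star_r0_le : (u_star_r0 lam c <= (lam^-1 * expR (-1) - c)%:E)%E.
Proof.
apply: ge_ereal_sup => _ [p0 [p0_ge0 ->]].
rewrite creator_profit_no_royalty // lee_fin lerD2r.
rewrite -[X in X * _](mulKf (lt0r_neq0 lam_gt0)) -mulrA ler_pM2l ?invr_gt0 //.
by rewrite mulNr; exact: mulr_expRN_le.
Qed.

End creator_profit.

Theorem corollary5 (R : realType) :
  [set lc : R * R | (0 <= u_star lc.1 lc.2)%E /\ (u_star_r0 lc.1 lc.2 < 0)%E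
                    /\ 0 < lc.1 /\ 0 < lc.2] !=set0.
Proof.
exists (1, 2^-1) => /=; split; last split; [| |by rewrite ltr01 invr_gt0].
- apply: le_trans (u_star_ge 1 2^-1 ltr01).
  by rewrite mulr1 subrr.
- apply: le_lt_trans (u_star_r0_le 1 2^-1 ltr01) _.
  by rewrite invr1 mul1r lte_fin subr_lt0 expRN1_lt_half.
Qed.
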